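(* Let $\mathscr M\subset ba(\mathcal A)$. There exists $\lambda\in ba(\mathcal A)$ with $\mathscr M\subset ba(\mathcal A,\lambda)$ if and only if $\mathscr M\subset ba(\mathcal A,m)$ for some $m\in\mathbf A(\mathscr M)$.
   Context: $\mathcal A$ algebra of subsets of $\Omega$; $ba(\mathcal A)$ bounded finitely additive real set functions with $\|\mu\|=|\mu|(\Omega)$. $ba(\mathcal A,\lambda)=\{\mu\in ba(\mathcal A):\mu\ll\lambda\}$, where $\mu\ll\lambda$ means for every $\varepsilon>0$ there is $\delta>0$ with $|\lambda|(A)<\delta\Rightarrow|\mu|(A)<\varepsilon$. $\mathbf A(\mathscr M)=\{\sum_n\alpha_n\frac{|\mu_n|}{1\vee\|\mu_n\|}:\mu_n\in\mathscr M,\ \alpha_n\ge0,\ \sum_n\alpha_n=1\}$. *)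

From Stdlib Require Import Reals Lra List ClassicalEpsilon.
Open Scope R_scope.

Definition set (X : Type) := X -> Prop.
Definition setfun (X : Type) := set X -> R.

Definition is_algebra {X : Type} (A : set (set X)) : Prop :=
  A (fun _ => True) /\
  (forall E, A E -> A (fun x => ~ E x)) /\
  (forall E F, A E -> A F -> A (fun x => E x \/ F x)).

Definition disjoint {X : Type} (E F : set X) : Prop := forall x, ~ (E x /\ F x).

Definition is_partition {X : Type} (A : set (set X)) (E : set X) (L : list (set X)) : Prop :=
  (forall F, In F L -> A F) /\
  (forall i j, (i < length L)%nat -> (j < length L)%nat -> i <> j ->
     disjoint (nth i L (fun _ => False)) (nth j L (fun _ => False))) /\
  (forall x, E x <-> exists F, In F L /\ F x).

Definition abs_sum {X : Type} (mu : setfun X) (L : list (set X)) : R :=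
  fold_right (fun F s => Rabs (mu F) + s) 0 L.

Definition var_values {X : Type} (A : set (set X)) (mu : setfun X) (E : set X) : R -> Prop :=
  fun s => exists L, is_partition A E L /\ s = abs_sum mu L.

(* |mu|(E): total variation of mu on E (supremum over finite A-partitions of E);
   junk value if the supremum does not exist. *)
Definition var {X : Type} (A : set (set X)) (mu : setfun X) (E : set X) : R :=
  epsilon (inhabits 0) (fun v => is_lub (var_values A mu E) v).

Definition bnorm {X : Type} (A : set (set X)) (mu : setfun X) : R :=
  var A mu (fun _ => True).

Definition fin_additive {X : Type} (A : set (set X)) (mu : setfun X) : Prop :=
  forall E F, A E -> A F -> disjoint E F -> mu (fun x => E x \/ F x) = mu E + mu F.

Definition ba {X : Type} (A : set (set X)) (mu : setfun X) : Prop :=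
  fin_additive A mu /\ exists K, forall s, var_values A mu (fun _ => True) s -> s <= K.

Definition abs_cont {X : Type} (A : set (set X)) (mu lam : setfun X) : Prop :=
  forall eps, 0 < eps -> exists delta, 0 < delta /\
    forall E, A E -> var A lam E < delta -> var A mu E < eps.

Definition in_ba_ac {X : Type} (A : set (set X)) (lam mu : setfun X) : Prop :=
  ba A mu /\ abs_cont A mu lam.

Definition in_AM {X : Type} (A : set (set X)) (M : set (setfun X)) (m : setfun X) : Prop :=
  exists (mu : nat -> setfun X) (alpha : nat -> R),
    (forall n, M (mu n)) /\ (forall n, 0 <= alpha n) /\ infinite_sum alpha 1 /\
    forall E, A E ->
      infinite_sum (fun n => alpha n * var A (mu n) E / Rmax 1 (bnorm A (mu n))) (m E).

(* The converse direction is immediate, since every m in A(M) is a positive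
   additive set function and therefore lies in ba(A).  For the direct direction
   fix lam and put l = |lam|.  For a sequence t of members of M let
   mixture t = sum_n 2^-(n+1) |t_n| / (1 v ||t_n||), an element of A(M), and let
   the concealment of t be the largest amount of l carried by sets of
   arbitrarily small (mixture t)-measure.  Merging countably many sequences
   (Cantor pairing) can only lower the concealment, so some sequence t attains
   the infimum.  If some mu in M were not controlled by mixture t, the sets
   witnessing this carry a fixed amount of |mu|, hence (mu << lam) a fixed
   amount eta of l, outside every set small for the mixture of mu :: t; so
   prepending mu lowers the concealment by eta, contradicting minimality. *)

From Stdlib Require Import Reals Lra Lia List ClassicalEpsilon FunctionalExtensionality
  PropExtensionality Classical Cantor.
Open Scope R_scope.

Lemma set_ext {X : Type} (E F : set X) : (forall x, E x <-> F x) -> E = F.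
Proof.
  intros H; apply functional_extensionality; intro x; apply propositional_extensionality; auto.
Qed.

Lemma lub_add_le (P Q : R -> Prop) a b c :
  is_lub P a -> is_lub Q b -> (forall p q, P p -> Q q -> p + q <= c) -> a + b <= c.
Proof.
  intros [_ Ha] [_ Hb] Hc.
  assert (Hq : forall q, Q q -> a <= c - q).
  { intros q Hq. apply Ha. intros p Hp. specialize (Hc p q Hp Hq). lra. }
  assert (b <= c - a); [|lra].
  apply Hb. intros q Hq'. specialize (Hq q Hq'). lra.
Qed.

Lemma lub_unique (P : R -> Prop) a b : is_lub P a -> is_lub P b -> a = b.
Proof. intros [Ha1 Ha2] [Hb1 Hb2]. apply Rle_antisym; auto. Qed.

Lemma nth_map_lt {T U} (f : T -> U) L i d d' :
  (i < length L)%nat -> nth i (map f L) d = f (nth i L d').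
Proof. intros; rewrite (nth_indep _ d (f d')) by (rewrite length_map; auto); apply map_nth. Qed.

Definition weight (n : nat) : R := (/2) ^ (S n).

Lemma half_pow_pos n : 0 < (/2) ^ n.
Proof. apply pow_lt; lra. Qed.

Lemma weight_pos n : 0 < weight n.
Proof. apply half_pow_pos. Qed.

Lemma weight_partial_sum K : sum_f_R0 weight K = 1 - (/2) ^ (S K).
Proof.
  induction K; [simpl; unfold weight; simpl; lra|]. simpl sum_f_R0. rewrite IHK. unfold weight.
  change ((/2)^(S (S K))) with (/2 * (/2)^(S K)). lra.
Qed.

Lemma weight_sum : infinite_sum weight 1.
Proof.
  intros eps Heps. destruct (pow_lt_1_zero (/2) ltac:(rewrite Rabs_right; lra) eps Heps) as [N HN].
  exists N; intros n Hn. rewrite weight_partial_sum. unfold Rdist.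
  replace (1 - (/2) ^ S n - 1) with (- (/2)^(S n)) by ring. rewrite Rabs_Ropp. apply HN; lia.
Qed.

Lemma infinite_sum_le (a : nat -> R) l B : infinite_sum a l -> (forall N, sum_f_R0 a N <= B) -> l <= B.
Proof.
  intros Ha HB. destruct (Rle_lt_dec l B) as [|Hlt]; auto.
  destruct (Ha (l - B) ltac:(lra)) as [N HN]. specialize (HN N (le_n _)). specialize (HB N).
  unfold Rdist in HN. apply Rabs_def2 in HN. lra.
Qed.

Lemma infinite_sum_plus a b la lb : infinite_sum a la -> infinite_sum b lb ->
  infinite_sum (fun n => a n + b n) (la + lb).
Proof.
  intros Ha Hb eps He. destruct (CV_plus _ _ _ _ Ha Hb eps He) as [N HN].
  exists N; intros n Hn. rewrite plus_sum. apply HN; auto.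
Qed.

Lemma infinite_sum_ext a b l : (forall n, a n = b n) -> infinite_sum a l -> infinite_sum b l.
Proof.
  intros H Ha eps He. destruct (Ha eps He) as [N HN]. exists N; intros n Hn.
  rewrite <- (sum_eq a b n (fun i _ => H i)). apply HN; auto.
Qed.

(* Truncation to [0,1]; the normalized variations below already lie there. *)
Definition clamp (c : R) : R := Rmax 0 (Rmin 1 c).

Lemma clamp_range c : 0 <= clamp c <= 1.
Proof. unfold clamp, Rmax, Rmin; repeat destruct Rle_dec; lra. Qed.

Lemma clamp_id c : 0 <= c <= 1 -> clamp c = c.
Proof. intros; unfold clamp, Rmax, Rmin; repeat destruct Rle_dec; lra. Qed.

(* [sum_n weight n * clamp (f n)]: by truncating, the series converges for
   every [f], so mixtures can be defined without side conditions. *)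
Definition clamped_term (f : nat -> R) (n : nat) : R := weight n * clamp (f n).

Lemma clamped_term_range f n : 0 <= clamped_term f n <= weight n.
Proof. unfold clamped_term; pose proof (clamp_range (f n)); pose proof (weight_pos n); split; nra. Qed.

Lemma clamped_series_ex (f : nat -> R) : {l | infinite_sum (clamped_term f) l}.
Proof.
  destruct (Rseries_CV_comp (clamped_term f) weight) as [l Hl].
  - exact (clamped_term_range f).
  - exists 1; exact weight_sum.
  - exists l; exact Hl.
Qed.

Definition clamped_series (f : nat -> R) : R := proj1_sig (clamped_series_ex f).

Lemma clamped_series_spec f : infinite_sum (clamped_term f) (clamped_series f).
Proof. exact (proj2_sig (clamped_series_ex f)). Qed.

Lemma clamped_series_ge_term f n : clamped_term f n <= clamped_series f.
Proof.
  assert (H : clamped_term f n <= sum_f_R0 (clamped_term f) n).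
  { destruct n; simpl; [lra|].
    pose proof (cond_pos_sum (clamped_term f) n (fun k => proj1 (clamped_term_range f k))). lra. }
  pose proof (sum_incr _ n _ (clamped_series_spec f) (fun k => proj1 (clamped_term_range f k))). lra.
Qed.

Lemma clamped_series_ge0 f : 0 <= clamped_series f.
Proof. pose proof (clamped_series_ge_term f 0); pose proof (clamped_term_range f 0); lra. Qed.

(* If the first [N+1] values are at most [eta], the series is at most
   [eta + 2^-(N+1)]: the tail has total weight [2^-(N+1)]. *)
Lemma clamped_series_tail f N eta : (forall n, (n <= N)%nat -> clamp (f n) <= eta) -> 0 <= eta ->
  clamped_series f <= eta + (/2) ^ (S N).
Proof.
  intros Hf He. set (a := clamped_term f).
  assert (Hhead : forall K, (K <= N)%nat -> sum_f_R0 a K <= eta * (1 - (/2)^(S K))).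
  { induction K; intros HK.
    - simpl. unfold a, clamped_term, weight. simpl. specialize (Hf 0%nat HK). nra.
    - simpl sum_f_R0. specialize (IHK ltac:(lia)). unfold a at 2, clamped_term, weight.
      specialize (Hf (S K) HK). pose proof (half_pow_pos (S (S K))).
      change ((/2)^(S (S K))) with (/2 * (/2)^(S K)) in *. nra. }
  assert (Htail : forall d, sum_f_R0 a (N + d) <= eta + (/2)^(S N) - (/2)^(S (N + d))).
  { induction d.
    - rewrite Nat.add_0_r. specialize (Hhead N (le_n _)). pose proof (half_pow_pos (S N)). nra.
    - rewrite Nat.add_succ_r. simpl sum_f_R0. unfold a at 2, clamped_term, weight.
      pose proof (clamp_range (f (S (N + d)))). pose proof (half_pow_pos (S (N + d))).
      change ((/2)^(S (S (N + d)))) with (/2 * (/2)^(S (N + d))) in *. nra. }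
  apply (infinite_sum_le a); [apply clamped_series_spec|]. intro K.
  destruct (Nat.le_gt_cases K N) as [HK|HK].
  - specialize (Hhead K HK). pose proof (half_pow_pos (S K)). pose proof (half_pow_pos (S N)). nra.
  - replace K with (N + (K - N))%nat by lia. specialize (Htail (K - N)%nat).
    pose proof (half_pow_pos (S (N + (K - N)))). lra.
Qed.

Lemma clamped_series_shift f g : (forall n, g (S n) = f n) -> clamped_series f <= 2 * clamped_series g.
Proof.
  intros Hg. set (a := clamped_term f). set (b := clamped_term g).
  assert (Hshift : forall K, sum_f_R0 b (S K) = b 0%nat + /2 * sum_f_R0 a K).
  { induction K.
    - simpl. unfold a, b, clamped_term, weight. rewrite Hg. simpl. lra.
    - change (sum_f_R0 b (S (S K))) with (sum_f_R0 b (S K) + b (S (S K))). rewrite IHK.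
      simpl sum_f_R0. unfold a, b, clamped_term, weight. rewrite Hg.
      change ((/2)^(S (S (S K)))) with (/2 * (/2)^(S (S K))). lra. }
  apply (infinite_sum_le a); [apply clamped_series_spec|]. intro K.
  pose proof (sum_incr b (S K) _ (clamped_series_spec g) (fun k => proj1 (clamped_term_range g k))).
  rewrite Hshift in H. pose proof (proj1 (clamped_term_range g 0)). fold b in H0. lra.
Qed.

Section SetFunctions.

Variable X : Type.
Variable A : set (set X).
Hypothesis HA : is_algebra A.

Lemma alg_full : A (fun _ => True).
Proof. exact (proj1 HA). Qed.

Lemma alg_compl E : A E -> A (fun x => ~ E x).
Proof. apply (proj1 (proj2 HA)). Qed.

Lemma alg_union E F : A E -> A F -> A (fun x => E x \/ F x).
Proof. apply (proj2 (proj2 HA)). Qed.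

Lemma alg_inter E F : A E -> A F -> A (fun x => E x /\ F x).
Proof.
  intros HE HF.
  replace (fun x => E x /\ F x) with (fun x => ~ (~ E x \/ ~ F x)).
  - apply alg_compl, alg_union; apply alg_compl; auto.
  - apply set_ext; intro x; split; [intro H; apply NNPP; intro H'; apply H; tauto | tauto].
Qed.

Lemma alg_diff E F : A E -> A F -> A (fun x => E x /\ ~ F x).
Proof. intros HE HF; apply alg_inter; auto; apply alg_compl; auto. Qed.

Lemma alg_empty : A (fun _ => False).
Proof.
  replace (fun _ : X => False) with (fun _ : X => ~ True).
  - apply alg_compl, alg_full.
  - apply set_ext; intro; tauto.
Qed.

Lemma part_single E : A E -> is_partition A E (E :: nil).
Proof.
  intros HE; split; [intros F [<-|[]]; auto|]. split.
  - intros i j Hi Hj Hij; simpl in *; lia.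
  - intro x; split; [intro; exists E; split; [left|]; auto|intros [G [[<-|[]] Gx]]; auto].
Qed.

Lemma part_elem E L F x : is_partition A E L -> In F L -> F x -> E x.
Proof. intros [_ [_ H]] HF Fx; apply H; eauto. Qed.

Lemma part_cons E F L : A E -> is_partition A E (F :: L) ->
  A F /\ A (fun x => E x /\ ~ F x) /\ is_partition A (fun x => E x /\ ~ F x) L /\
  E = (fun x => F x \/ (E x /\ ~ F x)) /\ disjoint F (fun x => E x /\ ~ F x).
Proof.
  intros HE [H1 [H2 H3]].
  assert (HF : A F) by (apply H1; left; auto).
  split; [auto|]. split; [apply alg_diff; auto|]. split; [|split].
  - split; [intros G HG; apply H1; right; auto|]. split.
    + intros i j Hi Hj Hij. apply (H2 (S i) (S j)); simpl; lia.
    + intro x; split.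
      * intros [Hx Hnx]. destruct (proj1 (H3 x) Hx) as [G [[<-|HG] Gx]]; [tauto|eauto].
      * intros [G [HG Gx]]. split; [apply H3; exists G; split; [right|]; auto|].
        intro Fx. destruct (In_nth L G (fun _ => False) HG) as [n [Hn Hnth]].
        apply (H2 0%nat (S n) ltac:(simpl; lia) ltac:(simpl; lia) ltac:(lia) x); simpl.
        rewrite Hnth; auto.
  - apply set_ext; intro x; split.
    + intro Ex. destruct (classic (F x)); tauto.
    + intros [Fx|[Ex _]]; auto. apply H3; exists F; split; [left|]; auto.
  - intros x [? [? ?]]; tauto.
Qed.

Lemma part_app E F L1 L2 : is_partition A E L1 -> is_partition A F L2 ->
  disjoint E F -> is_partition A (fun x => E x \/ F x) (L1 ++ L2).
Proof.
  intros P1 P2 HEF. pose proof P1 as [A1 [D1 U1]]. pose proof P2 as [A2 [D2 U2]].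
  assert (Hcross : forall i j, (i < length L1)%nat -> (j < length L2)%nat ->
            disjoint (nth i L1 (fun _ => False)) (nth j L2 (fun _ => False))).
  { intros i j Hi Hj x [H1 H2]. apply (HEF x); split.
    - exact (part_elem E L1 _ x P1 (nth_In L1 _ Hi) H1).
    - exact (part_elem F L2 _ x P2 (nth_In L2 _ Hj) H2). }
  split; [intros G HG; destruct (in_app_or _ _ _ HG); auto|]. split.
  - intros i j Hi Hj Hij. rewrite length_app in Hi, Hj.
    destruct (Nat.lt_ge_cases i (length L1)) as [Ii|Ii];
    destruct (Nat.lt_ge_cases j (length L1)) as [Ij|Ij].
    + rewrite !app_nth1; auto.
    + rewrite app_nth1, app_nth2 by lia. apply Hcross; lia.
    + rewrite app_nth2, app_nth1 by lia. intros x [H1 H2]. apply (Hcross j (i - length L1)%nat Ij ltac:(lia) x); auto.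
    + rewrite !app_nth2 by lia. apply D2; lia.
  - intro x; split.
    + intros [Ex|Fx]; [destruct (proj1 (U1 x) Ex) as [G [? ?]]|destruct (proj1 (U2 x) Fx) as [G [? ?]]];
        exists G; split; auto; apply in_or_app; auto.
    + intros [G [HG Gx]]; destruct (in_app_or _ _ _ HG);
        [left; eapply part_elem; eauto|right; eapply part_elem; eauto].
Qed.

Lemma part_map G L E : A E -> is_partition A G L ->
  is_partition A (fun x => G x /\ E x) (map (fun H x => H x /\ E x) L).
Proof.
  intros HE [A1 [D1 U1]]. split; [|split].
  - intros F HF. apply in_map_iff in HF as [H [<- HH]]. apply alg_inter; auto.
  - intros i j Hi Hj Hij. rewrite length_map in Hi, Hj.
    rewrite (nth_map_lt _ L i _ (fun _ => False) Hi), (nth_map_lt _ L j _ (fun _ => False) Hj).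
    intros x [[? _] [? _]]. apply (D1 i j Hi Hj Hij x); auto.
  - intro x; split.
    + intros [Gx Ex]. destruct (proj1 (U1 x) Gx) as [H [HH Hx]].
      exists (fun y => H y /\ E y); split; auto. apply in_map_iff; eauto.
    + intros [F [HF Fx]]. apply in_map_iff in HF as [H [<- HH]]. destruct Fx. split; auto. apply U1; eauto.
Qed.

Lemma abs_sum_app (mu : setfun X) L1 L2 : abs_sum mu (L1 ++ L2) = abs_sum mu L1 + abs_sum mu L2.
Proof. induction L1; simpl; [lra|]. unfold abs_sum in *; simpl. rewrite IHL1; lra. Qed.

Definition positive_additive (nu : setfun X) : Prop :=
  fin_additive A nu /\ forall E, A E -> 0 <= nu E.

Lemma additive_empty nu : fin_additive A nu -> nu (fun _ => False) = 0.
Proof.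
  intros Hadd.
  assert (H := Hadd _ _ alg_empty alg_empty (fun x (H : False /\ False) => proj1 H)).
  cbv beta in H. replace (fun x : X => False \/ False) with (fun _ : X => False) in H.
  - lra.
  - apply set_ext; intro; tauto.
Qed.

Lemma additive_partition_sum nu : fin_additive A nu ->
  forall L E, A E -> is_partition A E L -> fold_right (fun F s => nu F + s) 0 L = nu E.
Proof.
  intros Hadd L. induction L as [|F L IH]; intros E HE HP.
  - simpl. replace E with (fun _ : X => False); [rewrite additive_empty; auto|].
    apply set_ext; intro x; destruct HP as [_ [_ H3]]; rewrite H3; split; [tauto|].
    intros [G [[] _]].
  - destruct (part_cons E F L HE HP) as [HF [HE' [HP' [Heq Hd]]]].
    simpl. rewrite (IH _ HE' HP'), <- Hadd by auto. f_equal; symmetry; exact Heq.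
Qed.

Lemma abs_sum_positive nu L : positive_additive nu -> (forall F, In F L -> A F) ->
  abs_sum nu L = fold_right (fun F s => nu F + s) 0 L.
Proof.
  intros [_ Hp]. induction L as [|F L IH]; intros HL; [reflexivity|].
  unfold abs_sum in *; simpl. rewrite IH by (intros; apply HL; right; auto).
  rewrite Rabs_right; [reflexivity|]. apply Rle_ge, Hp, HL; left; auto.
Qed.

Lemma positive_var nu E : positive_additive nu -> A E -> var A nu E = nu E.
Proof.
  intros HP HE.
  assert (Hl : is_lub (var_values A nu E) (nu E)).
  { split.
    - intros s [L [HL ->]]. rewrite (abs_sum_positive nu L HP (proj1 HL)).
      rewrite (additive_partition_sum nu (proj1 HP) L E HE HL); lra.
    - intros b Hb. apply Hb. exists (E :: nil); split; [apply part_single; auto|].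
      unfold abs_sum; simpl. rewrite Rabs_right; [lra|]. apply Rle_ge, (proj2 HP); auto. }
  unfold var. apply (lub_unique (var_values A nu E)); auto.
  apply epsilon_spec; eauto.
Qed.

Lemma positive_ba nu : positive_additive nu -> ba A nu.
Proof.
  intros HP. split; [apply HP|]. exists (nu (fun _ => True)).
  intros s [L [HL ->]]. rewrite (abs_sum_positive nu L HP (proj1 HL)).
  rewrite (additive_partition_sum nu (proj1 HP) L _ alg_full HL); lra.
Qed.

Lemma positive_union_diff nu E F : positive_additive nu -> A E -> A F ->
  nu (fun x => E x \/ F x) = nu F + nu (fun x => E x /\ ~ F x).
Proof.
  intros HP HE HF.
  replace (fun x => E x \/ F x) with (fun x => F x \/ (E x /\ ~ F x)).
  - apply (proj1 HP); auto. apply alg_diff; auto. intros x [? [? ?]]; tauto.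
  - apply set_ext; intro x; split; [intros [?|[? ?]]; auto|].
    intros [?|?]; [destruct (classic (F x))|]; tauto.
Qed.

Lemma positive_mono nu E F : positive_additive nu -> A E -> A F ->
  (forall x, E x -> F x) -> nu E <= nu F.
Proof.
  intros HP HE HF Hs.
  rewrite <- (set_ext (fun x => F x \/ E x) F) by (intro x; split; [intros [?|?]|]; auto).
  rewrite (positive_union_diff nu F E HP HF HE).
  pose proof (proj2 HP _ (alg_diff F E HF HE)); lra.
Qed.

Lemma positive_subadditive nu E F : positive_additive nu -> A E -> A F ->
  nu (fun x => E x \/ F x) <= nu E + nu F.
Proof.
  intros HP HE HF. rewrite (positive_union_diff nu E F); auto.
  pose proof (positive_mono nu (fun x => E x /\ ~ F x) E HP (alg_diff E F HE HF) HE (fun x H => proj1 H)).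
  lra.
Qed.

Lemma var_lub mu E : ba A mu -> A E -> is_lub (var_values A mu E) (var A mu E).
Proof.
  intros [Hadd [K HK]] HE. unfold var. apply epsilon_spec.
  destruct (completeness (var_values A mu E)) as [v Hv]; [|exists (Rabs (mu E))|exists v; auto].
  - exists K. intros s [L [HL ->]].
    assert (HP : is_partition A (fun x => E x \/ ~ E x) (L ++ (fun x => ~ E x) :: nil)).
    { apply part_app; auto. apply part_single; apply alg_compl; auto. intros x; tauto. }
    replace (fun x => E x \/ ~ E x) with (fun _ : X => True) in HP by (apply set_ext; intro x; tauto).
    assert (H := HK _ (ex_intro _ _ (conj HP eq_refl))). rewrite abs_sum_app in H.
    unfold abs_sum at 2 in H; simpl in H. pose proof (Rabs_pos (mu (fun x => ~ E x))). lra.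
  - exists (E :: nil); split; [apply part_single; auto|]. unfold abs_sum; simpl; lra.
Qed.

Lemma var_values_single mu E : A E -> var_values A mu E (Rabs (mu E)).
Proof. intros HE. exists (E :: nil); split; [apply part_single; auto|]. unfold abs_sum; simpl; lra. Qed.

Lemma abs_sum_split mu E F L : fin_additive A mu -> A E -> A F -> disjoint E F ->
  (forall H, In H L -> A H /\ forall x, H x -> E x \/ F x) ->
  abs_sum mu L <= abs_sum mu (map (fun H x => H x /\ E x) L) + abs_sum mu (map (fun H x => H x /\ F x) L).
Proof.
  intros Hadd HE HF Hd. induction L as [|H L IH]; intros HL; [unfold abs_sum; simpl; lra|].
  unfold abs_sum in *; simpl.
  assert (IH' := IH (fun G HG => HL G (or_intror HG))).
  destruct (HL H (or_introl eq_refl)) as [AH HH].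
  replace H with (fun x => (fun y => H y /\ E y) x \/ (fun y => H y /\ F y) x) at 1.
  2:{ apply set_ext; intro x; split; [intros [[? ?]|[? ?]]; auto|]. intro Hx; destruct (HH x Hx); tauto. }
  rewrite Hadd; [| apply alg_inter; auto | apply alg_inter; auto | intros x [[? ?] [? ?]]; apply (Hd x); auto].
  pose proof (Rabs_triang (mu (fun y => H y /\ E y)) (mu (fun y => H y /\ F y))). lra.
Qed.

Lemma var_add mu E F : ba A mu -> A E -> A F -> disjoint E F ->
  var A mu (fun x => E x \/ F x) = var A mu E + var A mu F.
Proof.
  intros Hb HE HF Hd.
  assert (HEF : A (fun x => E x \/ F x)) by (apply alg_union; auto).
  pose proof (var_lub mu E Hb HE) as [UE _].
  pose proof (var_lub mu F Hb HF) as [UF _].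
  pose proof (var_lub mu _ Hb HEF) as [U LU].
  apply Rle_antisym.
  - apply LU. intros s [L [HL ->]].
    assert (H1 := part_map _ L E HE HL). assert (H2 := part_map _ L F HF HL).
    cbv beta in H1, H2.
    replace (fun x => (E x \/ F x) /\ E x) with E in H1 by (apply set_ext; intro x; tauto).
    replace (fun x => (E x \/ F x) /\ F x) with F in H2.
    2:{ apply set_ext; intro x; split; [|tauto]. intro Fx; split; auto. }
    assert (Hs := abs_sum_split mu E F L (proj1 Hb) HE HF Hd
                    (fun H HH => conj (proj1 HL H HH) (fun x Hx => part_elem _ L H x HL HH Hx))).
    assert (s1 := UE _ (ex_intro _ _ (conj H1 eq_refl))).
    assert (s2 := UF _ (ex_intro _ _ (conj H2 eq_refl))). lra.
  - apply (lub_add_le (var_values A mu E) (var_values A mu F)); try apply var_lub; auto.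
    intros s1 s2 [L1 [HL1 ->]] [L2 [HL2 ->]]. apply U. exists (L1 ++ L2); split.
    + apply part_app; auto.
    + symmetry; apply abs_sum_app.
Qed.

Lemma var_positive mu : ba A mu -> positive_additive (var A mu).
Proof.
  intros Hb. split.
  - intros E F HE HF Hd; apply var_add; auto.
  - intros E HE. pose proof (proj1 (var_lub mu E Hb HE) _ (var_values_single mu E HE)).
    pose proof (Rabs_pos (mu E)). lra.
Qed.

Definition normalized_var (mu : setfun X) (E : set X) : R := var A mu E / Rmax 1 (bnorm A mu).

Lemma normalized_var_range mu E : ba A mu -> A E -> 0 <= normalized_var mu E <= 1.
Proof.
  intros Hb HE. pose proof (var_positive mu Hb) as HP.
  pose proof (proj2 HP E HE).
  pose proof (positive_mono _ E _ HP HE alg_full (fun _ _ => I)).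
  pose proof (Rmax_l 1 (bnorm A mu)). pose proof (Rmax_r 1 (bnorm A mu)).
  unfold normalized_var, bnorm in *. split.
  - apply Rmult_le_pos; auto. left; apply Rinv_0_lt_compat; lra.
  - apply (Rmult_le_reg_r (Rmax 1 (var A mu (fun _ => True)))); [lra|].
    unfold Rdiv; rewrite Rmult_assoc, Rinv_l by lra. lra.
Qed.

Lemma var_normalized mu E : var A mu E = Rmax 1 (bnorm A mu) * normalized_var mu E.
Proof. unfold normalized_var. pose proof (Rmax_l 1 (bnorm A mu)). field. lra. Qed.

Definition mixture (s : nat -> setfun X) : setfun X :=
  fun E => clamped_series (fun n => normalized_var (s n) E).

Lemma mixture_spec s E : (forall n, ba A (s n)) -> A E ->
  infinite_sum (fun n => weight n * normalized_var (s n) E) (mixture s E).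
Proof.
  intros Hb HE. apply (infinite_sum_ext (clamped_term (fun n => normalized_var (s n) E)));
    [|apply clamped_series_spec].
  intro n; unfold clamped_term; rewrite clamp_id; auto. apply normalized_var_range; auto.
Qed.

Lemma mixture_in_AM (M : set (setfun X)) s : (forall n, M (s n)) -> (forall n, ba A (s n)) ->
  in_AM A M (mixture s).
Proof.
  intros Hs Hb. exists s, weight. split; [auto|]. split; [intro n; left; apply weight_pos|].
  split; [apply weight_sum|].
  intros E HE. apply (infinite_sum_ext (fun n => weight n * normalized_var (s n) E)).
  - intro n; unfold normalized_var, Rdiv; ring.
  - apply mixture_spec; auto.
Qed.

Lemma mixture_positive s : (forall n, ba A (s n)) -> positive_additive (mixture s).
Proof.
  intros Hb. split.
  - intros E F HE HF Hd.
    apply (uniqueness_sum (fun n => weight n * normalized_var (s n) (fun x => E x \/ F x))).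
    + apply mixture_spec; auto. apply alg_union; auto.
    + apply (infinite_sum_ext (fun n => weight n * normalized_var (s n) E + weight n * normalized_var (s n) F)).
      * intro n; unfold normalized_var; rewrite var_add; auto. unfold Rdiv; ring.
      * apply infinite_sum_plus; apply mixture_spec; auto.
  - intros E HE. apply clamped_series_ge0.
Qed.

Lemma mixture_ge_term s E n : (forall n, ba A (s n)) -> A E ->
  weight n * normalized_var (s n) E <= mixture s E.
Proof.
  intros Hb HE. pose proof (clamped_series_ge_term (fun n => normalized_var (s n) E) n) as H.
  unfold clamped_term in H. rewrite clamp_id in H; auto. apply normalized_var_range; auto.
Qed.

Definition scons (mu : setfun X) (s : nat -> setfun X) (n : nat) : setfun X :=
  match n with O => mu | S k => s k end.

Lemma mixture_scons mu s E : ba A mu -> (forall n, ba A (s n)) -> A E ->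
  mixture s E <= 2 * mixture (scons mu s) E /\ normalized_var mu E <= 2 * mixture (scons mu s) E.
Proof.
  intros Hmu Hb HE.
  assert (Hb' : forall n, ba A (scons mu s n)) by (intros [|n]; simpl; auto).
  split.
  - apply clamped_series_shift. intro n; reflexivity.
  - pose proof (mixture_ge_term (scons mu s) E 0 Hb' HE) as H. unfold weight in H. simpl in H. lra.
Qed.

Lemma finite_common_delta (P : nat -> R -> Prop) N :
  (forall n d d', 0 < d' <= d -> P n d -> P n d') -> (forall n, exists d, 0 < d /\ P n d) ->
  exists d, 0 < d /\ forall n, (n <= N)%nat -> P n d.
Proof.
  intros Hmono Hex. induction N as [|N [d1 [Hd1 H1]]].
  - destruct (Hex 0%nat) as [d [Hd Hd']]. exists d; split; auto.
    intros n Hn; replace n with 0%nat by lia; auto.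
  - destruct (Hex (S N)) as [d2 [Hd2 H2]].
    pose proof (Rmin_l d1 d2). pose proof (Rmin_r d1 d2).
    exists (Rmin d1 d2); split; [apply Rmin_pos; auto|]. intros n Hn.
    destruct (Nat.le_gt_cases n N) as [Hn'|Hn'].
    + apply (Hmono n d1); auto. split; [apply Rmin_pos|]; auto.
    + replace n with (S N) by lia. apply (Hmono (S N) d2); auto. split; [apply Rmin_pos|]; auto.
Qed.

(* If every term of [s] occurs in [t], then [mixture s << mixture t]: a set
   small for [mixture t] is small for the first [N] terms of [s], and the
   remaining terms carry weight at most [2^-(N+1)]. *)
Lemma mixture_dom s t : (forall n, ba A (s n)) -> (forall n, ba A (t n)) ->
  (forall n, exists j, t j = s n) ->
  forall eps, 0 < eps -> exists delta, 0 < delta /\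
    forall E, A E -> mixture t E < delta -> mixture s E < eps.
Proof.
  intros Hs Ht Hj eps He.
  destruct (pow_lt_1_zero (/2) ltac:(rewrite Rabs_right; lra) (eps/2) ltac:(lra)) as [N HN].
  assert (HNp := HN (S N) ltac:(lia)). rewrite Rabs_right in HNp by (left; apply half_pow_pos).
  set (P := fun n d => forall E, A E -> mixture t E < d -> normalized_var (s n) E <= eps / 2).
  destruct (finite_common_delta P N) as [d [Hd Hd']].
  - intros n d d' Hd' HP E HE Hlt. apply HP; auto. lra.
  - intro n. destruct (Hj n) as [j Htj]. pose proof (weight_pos j) as Hw.
    exists (weight j * (eps/2)). split; [nra|].
    intros E HE Hlt. pose proof (mixture_ge_term t E j Ht HE) as Hge. rewrite Htj in Hge.
    apply (Rmult_le_reg_l (weight j)); auto. lra.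
  - exists d; split; auto. intros E HE Hlt.
    apply Rle_lt_trans with (eps/2 + (/2)^(S N)); [|lra].
    apply clamped_series_tail; [|lra]. intros n Hn.
    rewrite clamp_id by (apply normalized_var_range; auto). apply Hd'; auto.
Qed.


(* [conceals l nu t]: sets of arbitrarily small [nu]-measure carry [l]-mass at
   least [t], i.e. an amount [t] of [l] escapes the control of [nu]. *)
Definition conceals (l nu : setfun X) (t : R) : Prop :=
  forall delta, 0 < delta -> exists E, A E /\ nu E < delta /\ t <= l E.

(* The largest such amount; it is [0] exactly when [l << nu]. *)
Definition concealment (l nu : setfun X) : R :=
  epsilon (inhabits 0) (fun v => is_lub (conceals l nu) v).

Lemma conceals_zero l nu : positive_additive l -> positive_additive nu -> conceals l nu 0.
Proof.
  intros Hl Hn d Hd. exists (fun _ => False). split; [apply alg_empty|].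
  rewrite (additive_empty nu (proj1 Hn)), (additive_empty l (proj1 Hl)). lra.
Qed.

Lemma concealment_spec l nu : positive_additive l -> positive_additive nu ->
  is_lub (conceals l nu) (concealment l nu).
Proof.
  intros Hl Hn. unfold concealment. apply epsilon_spec.
  destruct (completeness (conceals l nu)) as [v Hv]; [|exists 0; apply conceals_zero; auto|exists v; auto].
  exists (l (fun _ => True)). intros t Ht. destruct (Ht 1 ltac:(lra)) as [E [HE [_ Ht']]].
  pose proof (positive_mono l E _ Hl HE alg_full (fun _ _ => I)). lra.
Qed.

Lemma concealment_ge0 l nu : positive_additive l -> positive_additive nu -> 0 <= concealment l nu.
Proof. intros Hl Hn. apply (proj1 (concealment_spec l nu Hl Hn)), conceals_zero; auto. Qed.

Lemma concealment_anti l nu nu' : positive_additive l -> positive_additive nu -> positive_additive nu' ->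
  (forall eps, 0 < eps -> exists delta, 0 < delta /\ forall E, A E -> nu' E < delta -> nu E < eps) ->
  concealment l nu' <= concealment l nu.
Proof.
  intros Hl Hn Hn' Hd. apply (proj2 (concealment_spec l nu' Hl Hn')).
  intros t Ht. apply (proj1 (concealment_spec l nu Hl Hn)).
  intros d Hdp. destruct (Hd d Hdp) as [d' [Hd' Hd'']]. destruct (Ht d' Hd') as [E [HE [H1 H2]]].
  exists E; auto.
Qed.

(* ... and adjoining a [mu] that escapes [mixture t] strictly decreases the
   concealment: if [|mu|] stays [>= eps] on sets of small [mixture t]-measure,
   while [l]-small sets are [|mu|]-small, then these sets carry at least [eta]
   of [l] outside any set [F] small for [mixture (scons mu t)]. *)
Lemma conceals_scons l t mu eps eta : positive_additive l -> (forall n, ba A (t n)) -> ba A mu ->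
  0 < eps -> (forall delta, 0 < delta -> exists E, A E /\ mixture t E < delta /\ eps <= var A mu E) ->
  0 < eta -> (forall E, A E -> l E < eta -> var A mu E < eps / 2) ->
  forall tau, conceals l (mixture (scons mu t)) tau -> conceals l (mixture t) (tau + eta).
Proof.
  intros Hl Hb Hmu He Hbad Heta Hac tau Hh delta Hd.
  set (c := Rmax 1 (bnorm A mu)). assert (Hc : 1 <= c) by apply Rmax_l.
  set (d1 := Rmin (delta / 4) (eps / (4 * c))).
  assert (Hd1 : 0 < d1) by (apply Rmin_pos; [lra| apply Rdiv_lt_0_compat; lra]).
  pose proof (Rmin_l (delta/4) (eps/(4*c))) as Hd1a. pose proof (Rmin_r (delta/4) (eps/(4*c))) as Hd1b.
  fold d1 in Hd1a, Hd1b.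
  destruct (Hh d1 Hd1) as [F [HF [HmF HlF]]].
  destruct (mixture_scons mu t F Hmu Hb HF) as [C1 C2].
  assert (HvF : var A mu F < eps / 2).
  { rewrite var_normalized. fold c.
    assert (normalized_var mu F < eps / (2 * c)).
    { apply Rlt_le_trans with (2 * d1); [lra|].
      replace (eps / (2 * c)) with (2 * (eps / (4 * c))) by (field; lra). lra. }
    apply Rlt_le_trans with (c * (eps / (2 * c))); [apply Rmult_lt_compat_l; lra|]. right; field; lra. }
  destruct (Hbad (delta / 2) ltac:(lra)) as [E [HE [HmE HvE]]].
  assert (HD : A (fun x => E x /\ ~ F x)) by (apply alg_diff; auto).
  exists (fun x => E x \/ F x). split; [apply alg_union; auto|]. split.
  - pose proof (positive_subadditive (mixture t) E F (mixture_positive t Hb) HE HF). lra.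
  - rewrite (positive_union_diff l E F Hl HE HF).
    assert (eta <= l (fun x => E x /\ ~ F x)); [|lra].
    apply Rnot_lt_le; intro Hlt. apply Hac in Hlt; [|exact HD].
    pose proof (var_positive mu Hmu) as HPm.
    pose proof (positive_mono (var A mu) E (fun x => (E x /\ ~ F x) \/ F x) HPm HE (alg_union _ _ HD HF)
      (fun x Ex => match classic (F x) with or_introl h => or_intror h | or_intror h => or_introl (conj Ex h) end)).
    pose proof (positive_subadditive (var A mu) _ F HPm HD HF). lra.
Qed.

Section Family.

Variable M : set (setfun X).
Hypothesis HM : forall mu, M mu -> ba A mu.

Definition merge (sk : nat -> nat -> setfun X) (j : nat) : setfun X :=
  sk (fst (Cantor.of_nat j)) (snd (Cantor.of_nat j)).

Lemma concealment_merge l sk k : positive_additive l -> (forall k n, M (sk k n)) ->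
  concealment l (mixture (merge sk)) <= concealment l (mixture (sk k)).
Proof.
  intros Hl Hsk.
  assert (Hb : forall n, ba A (sk k n)) by (intro; apply HM, Hsk).
  assert (Hb' : forall j, ba A (merge sk j)) by (intro; apply HM, Hsk).
  apply concealment_anti; try apply mixture_positive; auto.
  apply mixture_dom; auto.
  intro n. exists (Cantor.to_nat (k, n)). unfold merge. rewrite Cantor.cancel_of_to. reflexivity.
Qed.

(* Some sequence of [M] has the least possible concealment: take sequences
   whose concealment approaches the infimum and merge them. *)
Lemma minimal_mixture_exists l : positive_additive l -> (exists mu, M mu) ->
  exists t, (forall n, M (t n)) /\
    forall s, (forall n, M (s n)) -> concealment l (mixture t) <= concealment l (mixture s).
Proof.
  intros Hl [mu0 Hmu0].
  set (G := fun s => concealment l (mixture s)).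
  set (lower := fun b => forall s : nat -> setfun X, (forall n, M (s n)) -> b <= G s).
  destruct (completeness lower) as [inf [Hinf_ub Hinf_lub]].
  { exists (G (fun _ => mu0)). intros b Hb. apply Hb; auto. }
  { exists 0. intros s Hs. apply concealment_ge0; auto. apply mixture_positive. intro; apply HM; auto. }
  assert (Happrox : forall k, exists s, (forall n, M (s n)) /\ G s < inf + (/2) ^ k).
  { intro k. apply NNPP; intro Hn.
    assert (Hlow : lower (inf + (/2) ^ k)).
    { intros s Hs. apply Rnot_lt_le. intro Hlt. apply Hn. eauto. }
    apply Hinf_ub in Hlow. pose proof (half_pow_pos k). lra. }
  destruct (choice _ Happrox) as [sk Hsk].
  exists (merge sk). split; [intro j; apply Hsk|].
  intros s Hs. apply Rle_trans with inf; [|apply Hinf_lub; intros b Hb; apply Hb; auto].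
  apply Rnot_lt_le; intro Hlt.
  destruct (pow_lt_1_zero (/2) ltac:(rewrite Rabs_right; lra) (concealment l (mixture (merge sk)) - inf) ltac:(lra)) as [k Hk].
  specialize (Hk k (le_n k)). rewrite Rabs_right in Hk by (left; apply half_pow_pos).
  pose proof (concealment_merge l sk k Hl (fun k => proj1 (Hsk k))). pose proof (proj2 (Hsk k)).
  unfold G in *. lra.
Qed.


(* A sequence of minimal concealment with respect to [|lam|] controls every
   member of [M] that [lam] controls: otherwise adjoining that member would
   lower the concealment further, by [conceals_scons]. *)
Lemma minimal_mixture_dominates lam t mu : ba A lam -> (forall n, M (t n)) ->
  (forall s, (forall n, M (s n)) ->
     concealment (var A lam) (mixture t) <= concealment (var A lam) (mixture s)) ->
  M mu -> abs_cont A mu lam -> abs_cont A mu (mixture t).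
Proof.
  intros Hlam Ht Hmin Hmu Hac eps Heps.
  set (l := var A lam) in *. assert (Hl : positive_additive l) by (apply var_positive; auto).
  assert (Hbt : forall n, ba A (t n)) by (intro; apply HM, Ht).
  assert (Hpt := mixture_positive t Hbt).
  apply NNPP; intro Hno.
  assert (Hescape : forall delta, 0 < delta ->
            exists E, A E /\ mixture t E < delta /\ eps <= var A mu E).
  { intros delta Hd. apply NNPP; intro Hn. apply Hno. exists delta; split; auto.
    intros E HE Hv. rewrite (positive_var _ E Hpt HE) in Hv.
    apply Rnot_le_lt. intro Hle. apply Hn. eauto. }
  destruct (Hac (eps / 2) ltac:(lra)) as [eta [Heta Hsmall]].
  assert (Hs : forall n, M (scons mu t n)) by (intros [|n]; simpl; auto).
  assert (Hps := mixture_positive (scons mu t) (fun n => HM _ (Hs n))).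
  assert (Hgain := conceals_scons l t mu eps eta Hl Hbt (HM mu Hmu) Heps Hescape Heta Hsmall).
  assert (Hdrop : concealment l (mixture (scons mu t)) <= concealment l (mixture t) - eta).
  { apply (proj2 (concealment_spec l _ Hl Hps)). intros tau Htau.
    pose proof (proj1 (concealment_spec l _ Hl Hpt) _ (Hgain tau Htau)). lra. }
  pose proof (Hmin _ Hs). lra.
Qed.

Lemma AM_positive m : in_AM A M m -> positive_additive m.
Proof.
  intros [mu [alpha [Hmu [Hal [_ Hser]]]]].
  assert (Hbm : forall n, ba A (mu n)) by auto.
  set (term := fun E n => alpha n * var A (mu n) E / Rmax 1 (bnorm A (mu n))).
  split.
  - intros E F HE HF Hd.
    apply (uniqueness_sum (term (fun x => E x \/ F x))); [apply Hser, alg_union; auto|].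
    apply (infinite_sum_ext (fun n => term E n + term F n)).
    + intro n. unfold term. rewrite var_add; auto. unfold Rdiv; ring.
    + apply infinite_sum_plus; apply Hser; auto.
  - intros E HE.
    assert (Hnn : forall n, 0 <= term E n).
    { intro n. replace (term E n) with (alpha n * normalized_var (mu n) E)
        by (unfold term, normalized_var, Rdiv; ring).
      apply Rmult_le_pos; auto. apply normalized_var_range; auto. }
    pose proof (sum_incr _ 0 _ (Hser E HE) Hnn) as H. pose proof (Hnn 0%nat).
    unfold term in *; simpl in H. lra.
Qed.

End Family.
End SetFunctions.

Theorem mainTheorem14 (X : Type) (A : set (set X)) (HA : is_algebra A)
  (M : set (setfun X)) (HM : forall mu, M mu -> ba A mu) (HMne : exists mu, M mu) :
  (exists lam, ba A lam /\ forall mu, M mu -> in_ba_ac A lam mu) <->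
  (exists m, in_AM A M m /\ forall mu, M mu -> in_ba_ac A m mu).
Proof.
  split.
  - intros [lam [Hlam Hac]].
    destruct (minimal_mixture_exists X A HA M HM (var A lam) (var_positive X A HA lam Hlam) HMne)
      as [t [Ht Hmin]].
    exists (mixture X A t). split.
    + apply mixture_in_AM; auto.
    + intros mu Hmu. split; [auto|].
      apply (minimal_mixture_dominates X A HA M HM lam); auto. apply Hac; auto.
  - intros [m [Hm Hac]]. exists m. split; auto.
    apply (positive_ba X A HA), (AM_positive X A HA M HM); auto.
Qed.
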